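(* Let $G$ be a simple cubic graph on vertex set $[n]$ with girth at least $5$, let $A$ be a MAI set of $G$ and $B=V(G)\setminus A$, and let $Y$ (resp. $Z$) be the set of vertices of degree $1$ in $G[A]$ (resp. in $G[B]$). Then (i) each vertex of $Z$ has at most one neighbour in $Y$; (ii) each vertex of $Y$ has at most one neighbour in $Z$.
   Context: A vertex set $A$ of a graph $G$ is an AI set (almost independent set) if $\Delta(G[A])\le 1$, i.e. every component of the induced subgraph $G[A]$ is a single vertex or a single edge. A vertex set $A$ is a MAI set (maximum almost independent set) of $G$ if (M1) $A$ is an AI set, (M2) $A$ contains an independent set of size $\alpha(G)$, and (M3) $A$ has maximum cardinality among all vertex sets satisfying (M1) and (M2). $\alpha(G)$ is the independence number of $G$. *)

From mathcomp Require Import all_boot all_order.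
Set Implicit Arguments. Unset Strict Implicit. Unset Printing Implicit Defensive.

Section Graphs.
Variable (T : finType) (e : rel T).

Definition simple_graph : Prop := irreflexive e /\ symmetric e.

Definition nbh (x : T) : {set T} := [set y | e x y].

Definition cubic : Prop := forall x : T, #|nbh x| = 3.

Definition no_triangle : Prop :=
  forall a b c : T, ~ [&& e a b, e b c & e c a].
Definition no_C4 : Prop :=
  forall a b c d : T, a != c -> b != d ->
    ~ [&& e a b, e b c, e c d & e d a].
Definition girth_ge5 : Prop := no_triangle /\ no_C4.

Definition independent (S : {set T}) : bool :=
  [forall x in S, forall y in S, ~~ e x y].

Definition alpha : nat := \max_(S : {set T} | independent S) #|S|.

Definition ideg (A : {set T}) (x : T) : nat := #|nbh x :&: A|.

Definition AI (A : {set T}) : bool := [forall x in A, ideg A x <= 1].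

Definition M12 (A : {set T}) : bool :=
  AI A && [exists S : {set T}, [&& S \subset A, independent S & #|S| == alpha]].

Definition MAI (A : {set T}) : Prop :=
  M12 A /\ forall B : {set T}, M12 B -> #|B| <= #|A|.

Definition deg1 (A : {set T}) : {set T} := [set x in A | ideg A x == 1].

End Graphs.

From mathcomp Require Import all_boot all_order.
Set Implicit Arguments. Unset Strict Implicit. Unset Printing Implicit Defensive.

(* Let S be a maximum independent set inside the AI set A.  A vertex y of
   degree 1 in G[A] can be traded in S for its unique A-neighbour, so S can be
   moved off any independent set of such vertices.  Hence a vertex z outside A
   whose A-neighbours all have degree 1 in G[A] could be added to S, which is
   impossible: z has an A-neighbour of degree 0 in G[A].  For z in Z its two
   A-neighbours are then not both in Y, which is (i).  If y in Y had two
   neighbours z1, z2 in Z, the other A-neighbour of each zi is isolated in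
   G[A], and girth 5 makes A - y + z1 + z2 an AI set still containing a
   maximum independent set, contradicting the maximality of A; this is (ii). *)

Section MaximumAlmostIndependent.

Variables (T : finType) (e : rel T).
Hypotheses (e_irr : irreflexive e) (e_sym : symmetric e).

Lemma independentP (S : {set T}) :
  reflect {in S &, forall x y, ~~ e x y} (independent e S).
Proof.
apply: (iffP forall_inP) => [iS x y xS yS | iS x xS].
  exact: (forall_inP (iS x xS)).
by apply/forall_inP => y; apply: iS.
Qed.

Lemma independentS (S S' : {set T}) :
  S' \subset S -> independent e S -> independent e S'.
Proof.
move=> sS'S /independentP iS; apply/independentP => x y xS' yS'.
exact: iS (subsetP sS'S x xS') (subsetP sS'S y yS').
Qed.

Lemma independent_le_alpha (S : {set T}) : independent e S -> #|S| <= alpha e.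
Proof. exact: (@leq_bigmax_cond _ (independent e) (fun S => #|S|) S). Qed.

Lemma independent_setU1 (S : {set T}) z :
  independent e S -> [disjoint nbh e z & S] -> independent e (z |: S).
Proof.
move=> iS dzS; have nzS x : x \in S -> ~~ e z x.
  by move=> xS; have := disjointFl dzS xS; rewrite inE => ->.
apply/independentP => x y /setU1P[->|xS] /setU1P[->|yS].
- by rewrite e_irr.
- exact: nzS.
- by rewrite e_sym nzS.
- by move/independentP: iS; apply.
Qed.

Lemma no_triangle_nbh_independent z : no_triangle e -> independent e (nbh e z).
Proof.
move=> notri; apply/independentP => x y; rewrite !inE => ezx ezy.
by apply/negP => exy; apply: (notri z x y); rewrite ezx exy e_sym.
Qed.

Lemma no_C4_common_nbr x y u w : no_C4 e -> x != y ->
  e y u -> e u x -> e x w -> e w y -> u = w.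
Proof.
move=> noC4 xy eyu eux exw ewy; apply/eqP; apply: contraT => uw; exfalso.
by apply: (noC4 y u x w); [rewrite eq_sym | | rewrite eyu eux exw ewy].
Qed.

Variable A : {set T}.
Hypothesis AI_A : AI e A.

Lemma AI_nbh_le1 x : x \in A -> ideg e A x <= 1.
Proof. exact: (forall_inP AI_A). Qed.

Lemma AI_nbh_uniq x : x \in A -> {in nbh e x :&: A &, forall u w, u = w}.
Proof. by move=> /AI_nbh_le1/card_le1_eqP le1 u w uN wN; apply: le1. Qed.

Lemma AI_not_deg1 x : x \in A -> x \notin deg1 e A -> ideg e A x = 0.
Proof.
move=> xA; rewrite inE xA /=.
by case: (ideg e A x) (AI_nbh_le1 xA) => [|[|]].
Qed.

Lemma independent_swap (S : {set T}) y y' :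
  S \subset A -> independent e S -> y \in S -> nbh e y :&: A = [set y'] ->
  independent e (y' |: S :\ y).
Proof.
move=> sSA iS yS Ny.
have /setIP[] : y' \in nbh e y :&: A by rewrite Ny set11.
rewrite inE => eyy' y'A.
have yA : y \in A := subsetP sSA y yS.
apply: independent_setU1; first exact: independentS (subD1set S y) iS.
rewrite -setI_eq0; apply/eqP/setP => w; rewrite !inE.
apply/negbTE; apply/and3P => [[ey'w wy wS]].
have wN : w \in nbh e y' :&: A by rewrite !inE ey'w (subsetP sSA w wS).
have yN : y \in nbh e y' :&: A by rewrite !inE e_sym eyy' yA.
by rewrite (AI_nbh_uniq y'A wN yN) eqxx in wy.
Qed.

(* The trade of y for its partner strictly shrinks [S :&: W], since the
   partner, being adjacent to y, is not in the independent set W. *)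
Lemma independent_avoid_deg1 (S W : {set T}) :
  S \subset A -> independent e S -> W \subset deg1 e A -> independent e W ->
  exists S' : {set T},
    [/\ S' \subset A, independent e S', #|S'| = #|S| & [disjoint S' & W]].
Proof.
move=> + + sWY iW.
elim: {S}_.+1 {-2}S (ltnSn #|S :&: W|) => // k IH S leSk sSA iS.
case: (set_0Vmem (S :&: W)) => [SW0 | [y /setIP[yS yW]]].
  by exists S; split=> //; rewrite -setI_eq0 SW0.
have /andP[yA /cards1P[y' Ny]] : (y \in A) && (ideg e A y == 1).
  by have := subsetP sWY y yW; rewrite inE.
have /setIP[] : y' \in nbh e y :&: A by rewrite Ny set11.
rewrite inE => eyy' y'A.
have y'W : y' \notin W by apply: contraL eyy' => y'W; move/independentP: iW; apply.
have y'S : y' \notin S by apply: contraL eyy' => y'S; move/independentP: iS; apply.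
have [|||S' [sS'A iS' cS' dS'W]] := IH (y' |: S :\ y).
- rewrite -ltnS (leq_trans _ leSk) // ltnS proper_card //; apply/properP; split.
    apply/subsetP => x /setIP[/setU1P[->|/setD1P[_ xS]] xW]; last by rewrite inE xS.
    by rewrite xW in y'W.
  exists y; first by rewrite inE yS.
  by rewrite !inE eqxx yW andbT orbF; apply: contraNneq y'W => <-.
- apply/subsetP => x /setU1P[->//|/setD1P[_ xS]]; exact: subsetP sSA x xS.
- exact: independent_swap Ny.
- exists S'; split=> //; rewrite cS' cardsU1 !inE (negbTE y'S) andbF add1n.
  by rewrite [#|S|](cardsD1 y) yS.
Qed.

Variable S0 : {set T}.
Hypotheses (sS0A : S0 \subset A) (iS0 : independent e S0) (cS0 : #|S0| = alpha e).

Lemma outside_nbh_not_deg1 z :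
  z \notin A -> independent e (nbh e z :&: A) ->
  exists2 x, x \in nbh e z :&: A & x \notin deg1 e A.
Proof.
move=> zA iN; apply/exists_inP; apply: contraT; rewrite negb_exists_in => /forall_inP allY.
have sNY : nbh e z :&: A \subset deg1 e A.
  by apply/subsetP => x /allY; rewrite negbK.
have [S [sSA iS cS dSN]] := independent_avoid_deg1 sS0A iS0 sNY iN.
have zS : z \notin S by apply: contra zA; apply: (subsetP sSA).
have dzS : [disjoint nbh e z & S].
  rewrite -setI_eq0; apply/eqP/setP => x; rewrite !inE.
  apply/negbTE/andP => [[ezx xS]].
  by move: (disjointFr dSN xS); rewrite !inE ezx (subsetP sSA x xS).
have := independent_le_alpha (independent_setU1 iS dzS).
by rewrite cardsU1 zS cS cS0 ltnn.
Qed.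

Hypotheses (e_cubic : cubic e) (e_no_triangle : no_triangle e).

Lemma deg1_compl_nbh_card z : z \in deg1 e (~: A) -> #|nbh e z :&: A| = 2.
Proof.
rewrite inE => /andP[_ /eqP dz]; have := cardsID A (nbh e z).
by rewrite setDE [#|_ :&: ~: A|]dz e_cubic => /eqP; rewrite -[3]/(2 + 1) eqn_add2r => /eqP.
Qed.

Lemma deg1_compl_nbh_not_deg1 z :
  z \in deg1 e (~: A) -> exists2 x, x \in nbh e z :&: A & x \notin deg1 e A.
Proof.
move=> zZ; apply: outside_nbh_not_deg1.
  by move: zZ; rewrite !inE => /andP[].
exact: independentS (subsetIl _ _) (no_triangle_nbh_independent z e_no_triangle).
Qed.

Lemma deg1_compl_nbhD1_card z x :
  z \in deg1 e (~: A) -> x \in nbh e z :&: A -> #|(nbh e z :&: A) :\ x| = 1.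
Proof. by move=> zZ xN; move: (deg1_compl_nbh_card zZ); rewrite (cardsD1 x) xN => -[]. Qed.

Lemma nbh_deg1_compl_deg1_le1 z :
  z \in deg1 e (~: A) -> #|nbh e z :&: deg1 e A| <= 1.
Proof.
move=> zZ; have [x xN xY] := deg1_compl_nbh_not_deg1 zZ.
rewrite -(deg1_compl_nbhD1_card zZ xN) subset_leq_card //.
apply/subsetP => u /setIP[uN uY].
have ux : u != x by apply: contraNneq xY => <-.
by move: uY; rewrite !inE ux => /andP[-> _]; rewrite andbT; rewrite inE in uN.
Qed.

Lemma deg1_compl_other_nbr_isolated z y v :
  z \in deg1 e (~: A) -> y \in nbh e z :&: deg1 e A -> v \in nbh e z :&: A ->
  v != y -> ideg e A v = 0.
Proof.
move=> zZ /setIP[yN yY] vN vy.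
have [x xN xY] := deg1_compl_nbh_not_deg1 zZ.
case: (eqVneq x v) => [<- | xv]; first by apply: AI_not_deg1 xY; case/setIP: xN.
have yx : y != x by apply: contraNneq xY => <-.
case/negP: vy; apply/eqP.
apply: (card_le1_eqP (eq_leq (deg1_compl_nbhD1_card zZ xN))); rewrite in_setD1.
  by rewrite yx inE yN; move: yY; rewrite inE => /andP[].
by rewrite eq_sym xv.
Qed.

Section Exchange.

Variables (y z1 z2 : T).
Hypotheses (e_no_C4 : no_C4 e) (yY : y \in deg1 e A) (z12 : z1 != z2)
  (sZ2 : [set z1; z2] \subset nbh e y :&: deg1 e (~: A)).

Let yA : y \in A. Proof. by move: yY; rewrite inE => /andP[]. Qed.

Let Z2P z : z \in [set z1; z2] -> e y z /\ z \in deg1 e (~: A).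
Proof. by move/(subsetP sZ2); rewrite !inE => /andP[]. Qed.

Lemma AI_exchange : AI e ([set z1; z2] :|: A :\ y).
Proof.
have /independentP iZ2 : independent e [set z1; z2].
  apply: independentS (no_triangle_nbh_independent y e_no_triangle).
  by apply/subsetP => z /Z2P[eyz _]; rewrite inE.
apply/forall_inP => x /setUP[xZ2 | /setD1P[xy xA]]; rewrite /ideg.
  have [eyx xZ] := Z2P xZ2.
  have yN : y \in nbh e x :&: A by rewrite !inE e_sym eyx yA.
  rewrite -(deg1_compl_nbhD1_card xZ yN) subset_leq_card //.
  apply/subsetP => u /setIP[xu /setUP[uZ2 | /setD1P[uy uA]]].
    by move: xu; rewrite inE (negbTE (iZ2 x u xZ2 uZ2)).
  by rewrite in_setD1 uy in_setI xu uA.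
rewrite setIUr; case: (set_0Vmem (nbh e x :&: [set z1; z2])) => [-> | [z /setIP[xz zZ2]]].
  rewrite set0U (leq_trans _ (AI_nbh_le1 xA)) // subset_leq_card //.
  by rewrite setIS // subD1set.
have [eyz zZ] := Z2P zZ2; rewrite inE in xz.
have yN : y \in nbh e z :&: deg1 e A by rewrite in_setI yY inE e_sym eyz.
have xN : x \in nbh e z :&: A by rewrite !inE e_sym xz.
have x0 := deg1_compl_other_nbr_isolated zZ yN xN xy.
rewrite (leq_trans (leq_card_setU _ _).1) // -(addn0 1) leq_add //.
  apply/card_le1_eqP => u w /setIP[xu /Z2P[eyu _]] /setIP[xw /Z2P[eyw _]].
  rewrite !inE in xu xw; symmetry.
  by apply: (no_C4_common_nbr e_no_C4 xy eyu); rewrite // e_sym.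
by rewrite -x0 subset_leq_card // setIS // subD1set.
Qed.

Lemma M12_exchange : M12 e ([set z1; z2] :|: A :\ y).
Proof.
rewrite /M12 AI_exchange; apply/existsP.
have iy : independent e [set y] by apply/independentP => u w /set1P-> /set1P->; rewrite e_irr.
have sYy : [set y] \subset deg1 e A by rewrite sub1set.
have [S [sSA iS cS dSy]] := independent_avoid_deg1 sS0A iS0 sYy iy.
exists S; apply/and3P; split=> //; last by rewrite cS cS0.
apply/subsetP => x xS.
rewrite inE in_setD1 (subsetP sSA x xS) andbT; apply/orP; right.
by apply: contraFneq (disjointFr dSy xS) => ->; rewrite set11.
Qed.

Lemma card_exchange : #|[set z1; z2] :|: A :\ y| = #|A|.+1.
Proof.
have zA z : z \in [set z1; z2] -> z \notin A by case/Z2P=> _; rewrite !inE => /andP[].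
rewrite cardsU.
have /eqP -> : [set z1; z2] :&: (A :\ y) == set0.
  rewrite setI_eq0 disjoint_subset; apply/subsetP => x /zA xA.
  by rewrite !inE (negbTE xA) andbF.
by rewrite cards0 subn0 cards2 z12 [#|A|](cardsD1 y) yA.
Qed.

End Exchange.

End MaximumAlmostIndependent.

Theorem lemma8 (n : nat) (e : rel 'I_n) (A : {set 'I_n}) :
  simple_graph e -> cubic e -> girth_ge5 e -> MAI e A ->
  let B := ~: A in
  let Y := deg1 e A in
  let Z := deg1 e B in
  (forall z, z \in Z -> #|nbh e z :&: Y| <= 1) /\
  (forall y, y \in Y -> #|nbh e y :&: Z| <= 1).
Proof.
move=> [e_irr e_sym] e_cubic [e_no_triangle e_no_C4] [M12A maxA] /=.
have /andP[AI_A /existsP[S0 /and3P[sS0A iS0 /eqP cS0]]] := M12A.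
split=> [|y yY].
  exact: (nbh_deg1_compl_deg1_le1 e_irr e_sym AI_A sS0A iS0 cS0 e_cubic e_no_triangle).
apply/card_le1_eqP => z1 z2 z1N z2N; apply/eqP; apply: contraT => z12.
have sZ2 : [set z1; z2] \subset nbh e y :&: deg1 e (~: A) by apply/subsetP => z /set2P[]->.
have := maxA _ (M12_exchange e_irr e_sym AI_A sS0A iS0 cS0 e_cubic e_no_triangle e_no_C4 yY sZ2).
by rewrite (card_exchange yY _ sZ2) ?ltnn // eq_sym.
Qed.
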